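(* Let $X$ be a K3 quartic surface, let $l\subset X$ be a line of singularity $0$, and suppose $l$ has a twin $l^*$. If $\Pi\supset l$ is a $p$-fiber of $l$, then $\Pi$ corresponds to a branch point of $\pi|_{\hat l}:\hat l\to\mathbb P^1$ (i.e. the fiber of $\pi$ corresponding to $\Pi$ is ramified for $\pi|_{\hat l}$).
   Context: $k$ is algebraically closed of characteristic $\neq 2,3$. A K3 quartic surface is a surface $X \subset \mathbb P^3_k$ of degree 4 whose only singularities are isolated rational double points; $\varphi:Z\to X$ is its minimal desingularization, $\hat C$ the strict transform. For a line $l\subset X$, the planes $\Pi_t\supset l$ cut residual cubics $E_t$ ($\Pi_t\cap X=l+E_t$) and induce an elliptic fibration $\pi:Z\to\mathbb P^1$. A line has singularity 0 if it contains no singular point of $X$ (then $\pi|_{\hat l}$ has degree 3). A plane $\Pi_t\supset l$ is a $p$-fiber of $l$ if $E_t$ splits into three (not necessarily distinct) lines. Two disjoint lines $l, l^*\subset X$ of singularity 0 are twin lines if there are exactly 10 lines on $X$ meeting both; equivalently, $X$ is projectively equivalent to a quartic $x_0 p_0(x_2,x_3)+x_1p_1(x_2,x_3)+x_2p_2(x_0,x_1)+x_3p_3(x_0,x_1)=0$ ($p_i$ binary cubic forms) with $l=\{x_0=x_1=0\}$, $l^*=\{x_2=x_3=0\}$. *)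

From HB Require Import structures.
From mathcomp Require Import all_boot all_order all_algebra.
Set Implicit Arguments. Unset Strict Implicit. Unset Printing Implicit Defensive.
Import Order.TTheory GRing.Theory Num.Theory.
Local Open Scope ring_scope.

(* Binary cubic forms  p(x,y) = c0 x^3 + c1 x^2 y + c2 x y^2 + c3 y^3.      *)
Record bcubic (K : Type) := BCubic { bc0 : K; bc1 : K; bc2 : K; bc3 : K }.

(* evaluation of a binary cubic with coefficients in K inside any commutative
   ring R receiving K via f (used with R = K, f = id, and R = {poly K},
   f = polyC to compute differentials) *)
Definition bcE (K : Type) (R : comNzRingType) (f : K -> R) (p : bcubic K)
  (x y : R) : R :=
  f (bc0 p) * x ^+ 3 + f (bc1 p) * x ^+ 2 * y + f (bc2 p) * x * y ^+ 2
  + f (bc3 p) * y ^+ 3.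

(* A quartic in twin-line normal form
     x0 p0(x2,x3) + x1 p1(x2,x3) + x2 p2(x0,x1) + x3 p3(x0,x1) = 0,
   with l = {x0 = x1 = 0}, l* = {x2 = x3 = 0}. *)
Record twinq (K : Type) := TwinQ
  { tq0 : bcubic K; tq1 : bcubic K; tq2 : bcubic K; tq3 : bcubic K }.

Definition twinF (K : Type) (R : comNzRingType) (f : K -> R) (Q : twinq K)
  (x0 x1 x2 x3 : R) : R :=
  x0 * bcE f (tq0 Q) x2 x3 + x1 * bcE f (tq1 Q) x2 x3
  + x2 * bcE f (tq2 Q) x0 x1 + x3 * bcE f (tq3 Q) x0 x1.

Definition F (K : fieldType) (Q : twinq K) (x0 x1 x2 x3 : K) : K :=
  twinF id Q x0 x1 x2 x3.

Definition Fline (K : fieldType) (Q : twinq K) (v0 v1 v2 v3 w0 w1 w2 w3 : K)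
  : {poly K} :=
  twinF (@polyC K) Q (v0%:P + w0 *: 'X) (v1%:P + w1 *: 'X)
                     (v2%:P + w2 *: 'X) (v3%:P + w3 *: 'X).

(* (v0:v1:v2:v3) is a singular point of X = {F = 0}: v <> 0, F(v) = 0 and the
   differential of F at v vanishes (the linear term of F(v + e w) is zero for
   every direction w). *)
Definition singular_pt (K : fieldType) (Q : twinq K) (v0 v1 v2 v3 : K) : Prop :=
  [/\ ~ [/\ v0 = 0, v1 = 0, v2 = 0 & v3 = 0],
      F Q v0 v1 v2 v3 = 0 &
      forall w0 w1 w2 w3 : K, (Fline Q v0 v1 v2 v3 w0 w1 w2 w3)`_1 = 0].

Definition l_sing0 (K : fieldType) (Q : twinq K) : Prop :=
  forall a b : K, ~ singular_pt Q 0 0 a b.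

Definition lstar_sing0 (K : fieldType) (Q : twinq K) : Prop :=
  forall a b : K, ~ singular_pt Q a b 0 0.

(* The plane Pi_[s:t] = {t x0 - s x1 = 0} containing l, parametrised linearly
   by (u, x2, x3) |-> (s u, t u, x2, x3); in these plane coordinates the
   equation of l is u. *)

Definition lin3 (K : fieldType) (a b c u x2 x3 : K) : K := a * u + b * x2 + c * x3.

(* Pi_[s:t] is a p-fiber of l: Pi ∩ X = l + E with E = three (not necessarily
   distinct) lines, i.e. F restricted to Pi equals u times a product of three
   nonzero linear forms (identity of polynomial functions on K^3, which for the
   infinite field K is the identity of ternary quartic forms). *)
Definition p_fiber (K : fieldType) (Q : twinq K) (s t : K) : Prop :=
  exists a1 b1 c1 a2 b2 c2 a3 b3 c3 : K,
    [/\ ~ [/\ a1 = 0, b1 = 0 & c1 = 0],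
        ~ [/\ a2 = 0, b2 = 0 & c2 = 0],
        ~ [/\ a3 = 0, b3 = 0 & c3 = 0] &
    forall u x2 x3 : K,
      F Q (s * u) (t * u) x2 x3
      = u * (lin3 a1 b1 c1 u x2 x3 * lin3 a2 b2 c2 u x2 x3
             * lin3 a3 b3 c3 u x2 x3)].

(* Indeed
     F(s u, t u, x2, x3) = u * ( s p0(x2,x3) + t p1(x2,x3)
                                 + u^2 (x2 p2(s,t) + x3 p3(s,t)) ),
   so E_[s:t] ∩ l = {s p0(x2,x3) + t p1(x2,x3) = 0}; this binary cubic is the
   fiber of pi|_l : l -> P^1 over [s:t] (l ≅ \hat l as l has singularity 0). *)
Definition fiber_form (K : fieldType) (R : comNzRingType) (f : K -> R)
  (Q : twinq K) (s t : K) (x2 x3 : R) : R :=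
  f s * bcE f (tq0 Q) x2 x3 + f t * bcE f (tq1 Q) x2 x3.

(* [s:t] is a branch point of pi|_l: the fiber divisor over [s:t] has a
   multiple point [a:b] of l, i.e. the binary cubic fiber_form vanishes at
   (a,b) together with its differential (a ramification point of pi|_l). *)
Definition branch_point (K : fieldType) (Q : twinq K) (s t : K) : Prop :=
  exists a b : K,
    [/\ ~ (a = 0 /\ b = 0),
        fiber_form id Q s t a b = 0 &
        forall c d : K,
          (fiber_form (@polyC K) Q s t (a%:P + c *: 'X) (b%:P + d *: 'X))`_1 = 0].

From HB Require Import structures.
From mathcomp Require Import all_boot all_order all_algebra.
From mathcomp Require Import ring.
Set Implicit Arguments.
Unset Strict Implicit.
Unset Printing Implicit Defensive.
Import GRing.Theory.
Local Open Scope ring_scope.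

(* On the plane Pi_[s:t], with coordinates (u, x2, x3), the quartic reads
   u (G + u^2 H), where G is the fiber cubic of pi|_l over [s:t] and
   H = x2 p2(s,t) + x3 p3(s,t) is a linear form, nonzero because the point
   (s:t:0:0) of l* is not singular.  If Pi is a p-fiber, G + u^2 H is the
   product of three linear forms a_i u + m_i; comparing powers of u gives
   a1 a2 a3 = 0, say a3 = 0, and then H = a1 a2 m3 forces a1, a2, m3 <> 0,
   while the u-coefficient a1 m2 m3 + a2 m1 m3 = 0 gives m2 proportional to
   m1.  Hence G = k m1^2 m3 has a double root where m1 vanishes. *)

Lemma coef1_deriv (R : nzRingType) (q : {poly R}) : q`_1 = q^`().[0].
Proof. by rewrite horner_coef0 coef_deriv mulr1n. Qed.

Section CubicCoefficients.
Variable K : fieldType.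
Hypotheses (hchar2 : (2%:R : K) != 0) (hchar3 : (3%:R : K) != 0).

(* Evaluate at 1, -1, 2, -2: these are four distinct nonzero points
   precisely because the characteristic is neither 2 nor 3. *)
Lemma cubic_coefs_eq0 (c0 c1 c2 c3 : K) :
  (forall u : K, u != 0 -> c0 + c1 * u + c2 * u ^+ 2 + c3 * u ^+ 3 = 0) ->
  [/\ c0 = 0, c1 = 0, c2 = 0 & c3 = 0].
Proof.
move=> h; pose f u := c0 + c1 * u + c2 * u ^+ 2 + c3 * u ^+ 3.
have f1 : f 1 = 0 := h 1 (oner_neq0 _).
have fN1 : f (-1) = 0 by apply: h; rewrite oppr_eq0 oner_eq0.
have f2 : f 2%:R = 0 := h _ hchar2.
have fN2 : f (- 2%:R) = 0 by apply: h; rewrite oppr_eq0.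
have h6 : (6%:R : K) != 0 by rewrite (natrM K 2 3) mulf_neq0.
have h12 : (12%:R : K) != 0 by rewrite (natrM K 2 6) mulf_neq0.
have cancel (n x : K) : n != 0 -> n * x = 0 -> x = 0.
  by move=> nz /eqP; rewrite mulf_eq0 (negPf nz) => /eqP.
have c2E : 6%:R * c2 = f 2%:R + f (- 2%:R) - (f 1 + f (-1)) by rewrite /f; ring.
have c3E : 12%:R * c3 = f 2%:R - f (- 2%:R) - 2%:R * (f 1 - f (-1)).
  by rewrite /f; ring.
rewrite f1 fN1 f2 fN2 !(addr0, subr0, mulr0) in c2E c3E.
have c2_0 := cancel _ _ h6 c2E; have c3_0 := cancel _ _ h12 c3E.
have c0E : 2%:R * c0 = f 1 + f (-1) - 2%:R * c2 by rewrite /f; ring.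
have c1E : 2%:R * c1 = f 1 - f (-1) - 2%:R * c3 by rewrite /f; ring.
rewrite f1 fN1 c2_0 c3_0 !(addr0, subr0, mulr0) in c0E c1E.
by split; [apply: cancel c0E | apply: cancel c1E | |].
Qed.

End CubicCoefficients.

Section BinaryCubics.
Variable K : fieldType.
Implicit Types (p : bcubic K) (a b c d e k B C : K).

(* bc_taylor1 and bc_taylor2 are the Taylor coefficients of
   e |-> p(a + e c, b + e d); the first is the directional derivative. *)
Definition bc_taylor1 p a b c d : K :=
  bc0 p * (3%:R * a ^+ 2 * c) + bc1 p * (2%:R * a * b * c + a ^+ 2 * d)
  + bc2 p * (b ^+ 2 * c + 2%:R * a * b * d) + bc3 p * (3%:R * b ^+ 2 * d).

Definition bc_taylor2 p a b c d : K :=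
  bc0 p * (3%:R * a * c ^+ 2) + bc1 p * (2%:R * a * c * d + b * c ^+ 2)
  + bc2 p * (2%:R * b * c * d + a * d ^+ 2) + bc3 p * (3%:R * b * d ^+ 2).

Lemma bcE_line p a b c d e :
  bcE id p (a + e * c) (b + e * d) =
  bcE id p a b + bc_taylor1 p a b c d * e + bc_taylor2 p a b c d * e ^+ 2
  + bcE id p c d * e ^+ 3.
Proof. rewrite /bcE /bc_taylor1 /bc_taylor2; ring. Qed.

Lemma coef1_bcE_line p a b c d :
  (bcE (@polyC K) p (a%:P + c *: 'X) (b%:P + d *: 'X))`_1 = bc_taylor1 p a b c d.
Proof.
rewrite coef1_deriv /bcE /bc_taylor1 !derivCE /= !hornerE /=; ring.
Qed.

Lemma linear_form_root B C : exists a b, ~ (a = 0 /\ b = 0) /\ B * a + C * b = 0.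
Proof.
have [/andP [/eqP B0 /eqP C0] | nz] := boolP ((B == 0) && (C == 0)).
  exists 1, 0; split; last by rewrite B0 C0; ring.
  by case=> /eqP; rewrite oner_eq0.
exists C, (- B); split; last by ring.
by case=> C0 /eqP; rewrite oppr_eq0 => /eqP B0; rewrite B0 C0 !eqxx in nz.
Qed.

Lemma bc_taylor1_eq0_of_square_factor (hchar2 : (2%:R : K) != 0)
    (hchar3 : (3%:R : K) != 0) p k B C B' C' a b c d :
  (forall x y, bcE id p x y = k * (B * x + C * y) ^+ 2 * (B' * x + C' * y)) ->
  B * a + C * b = 0 -> bc_taylor1 p a b c d = 0.
Proof.
move=> hp hab.
pose q2 := bc_taylor2 p a b c d - k * (B * c + C * d) ^+ 2 * (B' * a + C' * b).
pose q3 := bcE id p c d - k * (B * c + C * d) ^+ 2 * (B' * c + C' * d).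
suff /(cubic_coefs_eq0 hchar2 hchar3) [_ -> //] :
  forall e, e != 0 -> bcE id p a b + bc_taylor1 p a b c d * e + q2 * e ^+ 2
                      + q3 * e ^+ 3 = 0.
move=> e _.
have lin_e : B * (a + e * c) + C * (b + e * d) = e * (B * c + C * d).
  by rewrite -[RHS]add0r -hab; ring.
transitivity (bcE id p (a + e * c) (b + e * d)
  - k * (B * (a + e * c) + C * (b + e * d)) ^+ 2
      * (B' * (a + e * c) + C' * (b + e * d))).
  by rewrite lin_e bcE_line /q2 /q3; ring.
by rewrite hp subrr.
Qed.

Lemma bcubic_double_root_of_square_factor (hchar2 : (2%:R : K) != 0)
    (hchar3 : (3%:R : K) != 0) p k B C B' C' :
  (forall x y, bcE id p x y = k * (B * x + C * y) ^+ 2 * (B' * x + C' * y)) ->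
  exists a b, [/\ ~ (a = 0 /\ b = 0), bcE id p a b = 0 &
                  forall c d, bc_taylor1 p a b c d = 0].
Proof.
move=> hp; have [a [b [nab hab]]] := linear_form_root B C.
exists a, b; split=> // [|c d].
  by rewrite hp hab; ring.
exact: bc_taylor1_eq0_of_square_factor hp hab.
Qed.

End BinaryCubics.

Section LinearFactors.
Variable K : fieldType.
Implicit Types (g h : K -> K -> K).

Lemma linear_form_mul_eq0 (b3 c3 B C : K) :
  ~ (b3 = 0 /\ c3 = 0) ->
  (forall x y, (b3 * x + c3 * y) * (B * x + C * y) = 0) -> B = 0 /\ C = 0.
Proof.
move=> nz h.
have h10 := h 1 0; have h01 := h 0 1; have h11 := h 1 1.
rewrite !(mulr1, mulr0, addr0, add0r) in h10 h01 h11.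
have [b0 | b0] := eqVneq b3 0.
  have c0 : c3 != 0 by apply/eqP => c0; apply: nz.
  move/eqP: h01; rewrite mulf_eq0 (negPf c0) /= => /eqP C0.
  move/eqP: h11; rewrite b0 C0 add0r addr0 mulf_eq0 (negPf c0) /= => /eqP B0.
  by [].
move/eqP: h10; rewrite mulf_eq0 (negPf b0) /= => /eqP B0.
rewrite B0 add0r in h11.
have : b3 * C = (b3 + c3) * C - c3 * C by ring.
by rewrite h11 h01 subrr => /eqP; rewrite mulf_eq0 (negPf b0) => /eqP.
Qed.

Lemma square_factor_of_cancelling_terms g (a1 a2 b1 c1 b2 c2 b3 c3 : K) :
  (forall x y, g x y = (b1 * x + c1 * y) * (b2 * x + c2 * y) * (b3 * x + c3 * y)) ->
  (forall x y, a1 * ((b2 * x + c2 * y) * (b3 * x + c3 * y))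
               + a2 * ((b1 * x + c1 * y) * (b3 * x + c3 * y)) = 0) ->
  (exists x y, a1 * a2 * (b3 * x + c3 * y) != 0) ->
  forall x y, g x y = - a2 / a1 * (b1 * x + c1 * y) ^+ 2 * (b3 * x + c3 * y).
Proof.
move=> hg hcancel [x0 [y0 hne]].
have a1n : a1 != 0 by apply: contraNneq hne => ->; rewrite !mul0r.
have a2n : a2 != 0 by apply: contraNneq hne => ->; rewrite mulr0 mul0r.
have m3n : ~ (b3 = 0 /\ c3 = 0).
  by case=> b0 c0; move: hne; rewrite b0 c0 !mul0r addr0 mulr0 eqxx.
have [eb ec] : a1 * b2 + a2 * b1 = 0 /\ a1 * c2 + a2 * c1 = 0.
  apply: linear_form_mul_eq0 m3n _ => x y.
  by rewrite -(hcancel x y); ring.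
have b2E : b2 = - (a2 * b1) / a1.
  by rewrite -(addr0_eq eb); field.
have c2E : c2 = - (a2 * c1) / a1.
  by rewrite -(addr0_eq ec); field.
by move=> x y; rewrite hg b2E c2E; field.
Qed.

Lemma square_factor_of_split g h (a1 a2 a3 b1 c1 b2 c2 b3 c3 : K) :
  (forall x y, g x y = (b1 * x + c1 * y) * (b2 * x + c2 * y) * (b3 * x + c3 * y)) ->
  (forall x y, a1 * ((b2 * x + c2 * y) * (b3 * x + c3 * y))
     + a2 * ((b1 * x + c1 * y) * (b3 * x + c3 * y))
     + a3 * ((b1 * x + c1 * y) * (b2 * x + c2 * y)) = 0) ->
  (forall x y, h x y = a1 * a2 * (b3 * x + c3 * y) + a1 * a3 * (b2 * x + c2 * y)
                       + a2 * a3 * (b1 * x + c1 * y)) ->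
  a1 * a2 * a3 = 0 ->
  (exists x y, h x y != 0) ->
  exists k B C B' C', forall x y, g x y = k * (B * x + C * y) ^+ 2 * (B' * x + C' * y).
Proof.
move=> hg hcancel hh ha [x0 [y0 hne]]; rewrite hh in hne.
move/eqP: ha; rewrite !mulf_eq0 => /orP [/orP [] /eqP a0 | /eqP a0];
  rewrite a0 ?(mul0r, mulr0, add0r, addr0) in hne.
- exists (- a3 / a2), b2, c2, b1, c1.
  apply: (@square_factor_of_cancelling_terms g a2 a3 b2 c2 b3 c3 b1 c1).
  + by move=> x y; rewrite hg; ring.
  + by move=> x y; rewrite -(hcancel x y) a0; ring.
  + by exists x0, y0.
- exists (- a3 / a1), b1, c1, b2, c2.
  apply: (@square_factor_of_cancelling_terms g a1 a3 b1 c1 b3 c3 b2 c2).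
  + by move=> x y; rewrite hg; ring.
  + by move=> x y; rewrite -(hcancel x y) a0; ring.
  + by exists x0, y0.
- exists (- a2 / a1), b1, c1, b3, c3.
  apply: (@square_factor_of_cancelling_terms g a1 a2 b1 c1 b2 c2 b3 c3) => //.
  + by move=> x y; rewrite -(hcancel x y) a0; ring.
  + by exists x0, y0.
Qed.

End LinearFactors.

Section TwinQuartic.
Variable K : fieldType.
Implicit Types (Q : twinq K) (s t u x y : K).

Definition fiber_cubic Q s t : bcubic K :=
  BCubic (s * bc0 (tq0 Q) + t * bc0 (tq1 Q)) (s * bc1 (tq0 Q) + t * bc1 (tq1 Q))
         (s * bc2 (tq0 Q) + t * bc2 (tq1 Q)) (s * bc3 (tq0 Q) + t * bc3 (tq1 Q)).

Lemma fiber_formE (R : comNzRingType) (f : {rmorphism K -> R}) Q s t (x y : R) :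
  fiber_form f Q s t x y = bcE f (fiber_cubic Q s t) x y.
Proof. rewrite /fiber_form /bcE /= !rmorphD !rmorphM; ring. Qed.

Lemma F_plane Q s t u x y :
  F Q (s * u) (t * u) x y = u * (bcE id (fiber_cubic Q s t) x y
    + u ^+ 2 * (x * bcE id (tq2 Q) s t + y * bcE id (tq3 Q) s t)).
Proof. rewrite /F /twinF /bcE /=; ring. Qed.

Lemma singular_pt_lstar Q s t :
  ~ (s = 0 /\ t = 0) -> bcE id (tq2 Q) s t = 0 -> bcE id (tq3 Q) s t = 0 ->
  singular_pt Q s t 0 0.
Proof.
move=> hst h2 h3; split=> [[s0 t0 _ _] | | w0 w1 w2 w3]; first exact: hst.
  by rewrite /F /twinF /bcE /=; ring.
transitivity (w2 * bcE id (tq2 Q) s t + w3 * bcE id (tq3 Q) s t).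
  by rewrite coef1_deriv /Fline /twinF /bcE !derivCE /= !hornerE /=; ring.
by rewrite h2 h3; ring.
Qed.

Lemma lstar_residual_neq0 Q s t :
  lstar_sing0 Q -> ~ (s = 0 /\ t = 0) ->
  exists x y, x * bcE id (tq2 Q) s t + y * bcE id (tq3 Q) s t != 0.
Proof.
move=> hlstar hst.
have [h2 | nz2] := eqVneq (bcE id (tq2 Q) s t) 0; last first.
  by exists 1, 0; rewrite mul1r mul0r addr0.
have [h3 | nz3] := eqVneq (bcE id (tq3 Q) s t) 0; last first.
  by exists 0, 1; rewrite mul1r mul0r add0r.
by case: (hlstar s t); apply: singular_pt_lstar.
Qed.

Lemma plane_split_coefs (hchar2 : (2%:R : K) != 0) (hchar3 : (3%:R : K) != 0)
    Q s t (a1 b1 c1 a2 b2 c2 a3 b3 c3 : K) :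
  (forall u x y, F Q (s * u) (t * u) x y
     = u * (lin3 a1 b1 c1 u x y * lin3 a2 b2 c2 u x y * lin3 a3 b3 c3 u x y)) ->
  [/\ forall x y, bcE id (fiber_cubic Q s t) x y
                  = (b1 * x + c1 * y) * (b2 * x + c2 * y) * (b3 * x + c3 * y),
      forall x y, a1 * ((b2 * x + c2 * y) * (b3 * x + c3 * y))
                  + a2 * ((b1 * x + c1 * y) * (b3 * x + c3 * y))
                  + a3 * ((b1 * x + c1 * y) * (b2 * x + c2 * y)) = 0,
      forall x y, x * bcE id (tq2 Q) s t + y * bcE id (tq3 Q) s t
                  = a1 * a2 * (b3 * x + c3 * y) + a1 * a3 * (b2 * x + c2 * y)
                    + a2 * a3 * (b1 * x + c1 * y) &
      a1 * a2 * a3 = 0].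
Proof.
move=> hF.
have coefs x y : [/\
    (b1 * x + c1 * y) * (b2 * x + c2 * y) * (b3 * x + c3 * y)
      - bcE id (fiber_cubic Q s t) x y = 0,
    a1 * ((b2 * x + c2 * y) * (b3 * x + c3 * y))
      + a2 * ((b1 * x + c1 * y) * (b3 * x + c3 * y))
      + a3 * ((b1 * x + c1 * y) * (b2 * x + c2 * y)) = 0,
    a1 * a2 * (b3 * x + c3 * y) + a1 * a3 * (b2 * x + c2 * y)
      + a2 * a3 * (b1 * x + c1 * y)
      - (x * bcE id (tq2 Q) s t + y * bcE id (tq3 Q) s t) = 0 &
    a1 * a2 * a3 = 0].
  apply: (cubic_coefs_eq0 hchar2 hchar3) => u un.
  have := hF u x y; rewrite F_plane => /(mulfI un) hu.
  transitivity (lin3 a1 b1 c1 u x y * lin3 a2 b2 c2 u x y * lin3 a3 b3 c3 u x y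
    - (bcE id (fiber_cubic Q s t) x y
       + u ^+ 2 * (x * bcE id (tq2 Q) s t + y * bcE id (tq3 Q) s t))).
    by rewrite /lin3; ring.
  by rewrite hu subrr.
split=> [x y | x y | x y | ]; last by case: (coefs 0 0).
- by case: (coefs x y) => /eqP; rewrite subr_eq0 => /eqP ->.
- by case: (coefs x y).
- by case: (coefs x y) => _ _ /eqP; rewrite subr_eq0 => /eqP ->.
Qed.

End TwinQuartic.

Theorem corollary3p6 (K : closedFieldType)
  (hchar2 : (2%:R : K) != 0) (hchar3 : (3%:R : K) != 0)
  (Q : twinq K)
  (hl : l_sing0 Q) (hlstar : lstar_sing0 Q)
  (s t : K) (hst : ~ (s = 0 /\ t = 0))
  (hp : p_fiber Q s t) :
  branch_point Q s t.
Proof.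
case: hp => [a1 [b1 [c1 [a2 [b2 [c2 [a3 [b3 [c3 [_ _ _ hF]]]]]]]]]].
have [hG hcancel hH ha] := plane_split_coefs hchar2 hchar3 hF.
have [k [B [C [B' [C' hsq]]]]] :=
  square_factor_of_split hG hcancel hH ha (lstar_residual_neq0 hlstar hst).
have [a [b [nab hG0 hdiff]]] :=
  bcubic_double_root_of_square_factor hchar2 hchar3 hsq.
exists a, b; split=> // [|c d].
  by rewrite (fiber_formE idfun).
by rewrite fiber_formE coef1_bcE_line.
Qed.
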